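(* Let $f:(R,\mathfrak{m})\to(S,\mathfrak{n})$ be a flat homomorphism of finite length of Noetherian local rings. Let $\varphi$ be a self-map of finite length of $R$, and let $\psi$ be a ring endomorphism of $S$ with $\psi\circ f=f\circ\varphi$. Then $\psi$ is a self-map of finite length of $S$ and $h_{\mathrm{alg}}(\varphi,R)=h_{\mathrm{alg}}(\psi,S)$.
   Context: A homomorphism $g:(A,\mathfrak{a})\to(B,\mathfrak{b})$ of Noetherian local rings is of finite length if it is local and $g(\mathfrak{a})B$ is $\mathfrak{b}$-primary; its length is $\lambda(g):=\ell_B(B/g(\mathfrak{a})B)$. A self-map of finite length is an endomorphism that is of finite length; its iterates are then of finite length. The algebraic entropy of a self-map of finite length $\varphi$ of $R$ is $h_{\mathrm{alg}}(\varphi,R):=\lim_{n\to\infty}\frac1n\log\lambda(\varphi^n)$ (the limit exists). *)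

From HB Require Import structures.
From mathcomp Require Import all_boot all_algebra.
From Stdlib Require Import Reals ClassicalEpsilon.

Set Implicit Arguments.
Unset Strict Implicit.
Unset Printing Implicit Defensive.
Import GRing.Theory.

Local Open Scope ring_scope.

Definition is_ideal (A : comNzRingType) (I : A -> Prop) : Prop :=
  [/\ I 0, (forall x y, I x -> I y -> I (x + y)) &
      (forall r x, I x -> I (r * x))].

Definition proper_ideal (A : comNzRingType) (I : A -> Prop) : Prop :=
  is_ideal I /\ ~ I 1.

Definition maximal_ideal (A : comNzRingType) (m : A -> Prop) : Prop :=
  proper_ideal m /\
  forall J : A -> Prop, proper_ideal J -> (forall x, m x -> J x) ->
    forall x, J x -> m x.

Definition noetherian (A : comNzRingType) : Prop :=
  forall C : nat -> A -> Prop,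
    (forall n, is_ideal (C n)) ->
    (forall n x, C n x -> C n.+1 x) ->
    exists N : nat, forall n : nat, leq N n -> forall x, C n x -> C N x.

Definition local_ring (A : comNzRingType) : Prop :=
  exists m : A -> Prop, maximal_ideal m /\
    forall m' : A -> Prop, maximal_ideal m' -> forall x, m' x <-> m x.

Definition noetherian_local (A : comNzRingType) : Prop :=
  noetherian A /\ local_ring A.

Definition ext_ideal (A B : comNzRingType) (g : A -> B) (I : A -> Prop) : B -> Prop :=
  fun y => exists (s : seq (B * A)),
    (forall p, p \in s -> I p.2) /\ y = \sum_(p <- s) p.1 * g p.2.

Definition primary_to (A : comNzRingType) (m I : A -> Prop) : Prop :=
  [/\ proper_ideal I,
      (forall x y, I (x * y) -> I x \/ exists n, I (y ^+ n)) &
      (forall x, m x <-> exists n, I (x ^+ n))].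

(* Length of the A-module A/I: submodules of A/I correspond to ideals of A
   containing I, so ell_A(A/I) = n means that n is the largest number of
   strict inclusions in a chain of such ideals. *)
Definition ideal_chain (A : comNzRingType) (I : A -> Prop) (n : nat)
    (C : nat -> A -> Prop) : Prop :=
  (forall i : nat, leq i n -> is_ideal (C i) /\ forall x, I x -> C i x) /\
  (forall i : nat, leq i.+1 n ->
     (forall x, C i x -> C i.+1 x) /\ exists x, C i.+1 x /\ ~ C i x).

Definition quotient_length_is (A : comNzRingType) (I : A -> Prop) (n : nat) : Prop :=
  (exists C, ideal_chain I n C) /\
  (forall (k : nat) C, ideal_chain I k C -> leq k n).

Definition quotient_length (A : comNzRingType) (I : A -> Prop) : nat :=
  epsilon (inhabits O) (fun n => quotient_length_is I n).

Definition finite_length_hom (A B : comNzRingType) (g : A -> B) : Prop :=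
  forall (a : A -> Prop) (b : B -> Prop), maximal_ideal a -> maximal_ideal b ->
    (forall x, a x -> b (g x)) /\ primary_to b (ext_ideal g a).

Definition hom_length (A B : comNzRingType) (g : A -> B) : nat :=
  epsilon (inhabits O)
    (fun n => exists a : A -> Prop, maximal_ideal a /\
                quotient_length_is (ext_ideal g a) n).

Definition self_map_finite_length (A : comNzRingType) (phi : {rmorphism A -> A}) : Prop :=
  finite_length_hom phi.

(* h_alg(phi) := lim_{n -> oo} (1/n) log lambda(phi^n), indexed from n = 1. *)
Definition h_alg (A : comNzRingType) (phi : A -> A) : Rdefinitions.R :=
  epsilon (inhabits (IZR 0))
    (fun h => Un_cv (fun n => Rdiv (ln (INR (hom_length (iter n.+1 phi))))
                                   (INR n.+1)) h).

(* R-flatness of B via g, stated by the equational criterion of flatness. *)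
Definition flat_via (A B : comNzRingType) (g : A -> B) : Prop :=
  forall (n : nat) (f : 'I_n -> A) (x : 'I_n -> B),
    \sum_(i < n) g (f i) * x i = 0 ->
    exists (m : nat) (a : 'I_n -> 'I_m -> A) (y : 'I_m -> B),
      (forall i, x i = \sum_(j < m) g (a i j) * y j) /\
      (forall j, \sum_(i < n) f i * a i j = 0).

(* Two facts about lengths drive the proof. First, for a ring map h : B -> C with
   B Noetherian local with maximal ideal b, and an ideal J with b ⊆ √J, lengths
   of extensions are submultiplicative: ℓ(C/h(J)C) <= ℓ(B/J) ℓ(C/h(b)C), by
   induction on ℓ(B/J), adjoining one socle element of B/J at a time. Second, a
   flat local map f is faithfully flat, so f(J)S ∩ R = J and ℓ(R/J) <= ℓ(S/f(J)S).
   Applied to J = φ^k(m)R and to J = f(m)S, and using ψ^k ∘ f = f ∘ φ^k, they give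
   λ(φ^k) <= λ(f) λ(ψ^k) and λ(ψ^k) <= λ(φ^k) λ(f). So the lengths of the iterates
   agree up to the constant factor λ(f), and their exponential growth rates
   coincide. That ψ has finite length at all comes from f(φ(m))S ⊆ ψ(n)S and
   n ⊆ √(f(φ(m))S). *)

From Pilot Require Import Defs.
From HB Require Import structures.
From mathcomp Require Import all_boot all_algebra.
From mathcomp Require Import zify.
From Stdlib Require Import Reals Lra Lia.
From Stdlib Require Import Classical ClassicalEpsilon FunctionalExtensionality PropExtensionality.

Set Implicit Arguments.
Unset Strict Implicit.
Unset Printing Implicit Defensive.
Import GRing.Theory.
Local Open Scope ring_scope.

Section Ideals.
Variable A : comNzRingType.
Implicit Types (I J K m : A -> Prop) (x y : A).

Definition incl I J := forall x, I x -> J x.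
Definition unit_ideal : A -> Prop := fun _ => True.
Definition colon K x : A -> Prop := fun c => K (c * x).
Definition adjoin K x : A -> Prop := fun y => exists k r, K k /\ y = k + r * x.
Definition ideal_sum I J : A -> Prop := fun z => exists u v, I u /\ J v /\ z = u + v.
Definition ideal_meet I J : A -> Prop := fun z => I z /\ J z.
Definition sub_rad m J := forall x, m x -> exists k, J (x ^+ k).

Lemma ideal0 I : is_ideal I -> I 0. Proof. by case. Qed.

Lemma idealD I x y : is_ideal I -> I x -> I y -> I (x + y).
Proof. by case=> _ + _; apply. Qed.

Lemma idealM I r x : is_ideal I -> I x -> I (r * x).
Proof. by case=> _ _; apply. Qed.

Lemma idealMr I r x : is_ideal I -> I x -> I (x * r).
Proof. by rewrite mulrC; apply: idealM. Qed.

Lemma idealN I x : is_ideal I -> I x -> I (- x).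
Proof. by rewrite -mulN1r; apply: idealM. Qed.

Lemma idealB I x y : is_ideal I -> I x -> I y -> I (x - y).
Proof. by move=> HI Ix Iy; apply: idealD (idealN HI Iy). Qed.

Lemma ideal1 I x : is_ideal I -> I 1 -> I x.
Proof. by rewrite -(mulr1 x); apply: idealM. Qed.

Lemma idealMn I x n : is_ideal I -> I x -> I (x *+ n).
Proof. by rewrite -mulr_natr; apply: idealMr. Qed.

Lemma ideal_expr_le I x k n : is_ideal I -> I (x ^+ k) -> (k <= n)%nat -> I (x ^+ n).
Proof. by move=> HI Ixk /subnK <-; rewrite exprD; apply: idealM. Qed.

Lemma ideal_sum_seq I (T : Type) (s : seq T) (F : T -> A) :
  is_ideal I -> (forall t, I (F t)) -> I (\sum_(t <- s) F t).
Proof.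
move=> HI IF; elim: s => [|t s IHs]; first by rewrite big_nil; apply: ideal0.
by rewrite big_cons; apply: idealD.
Qed.

Lemma ideal_sum_mem I (T : eqType) (s : seq T) (F : T -> A) :
  is_ideal I -> (forall t, t \in s -> I (F t)) -> I (\sum_(t <- s) F t).
Proof.
move=> HI IF; rewrite big_seq big_mkcond.
by apply: ideal_sum_seq => // t; case: ifP => [/IF|_] //; apply: ideal0.
Qed.

(* Binomial expansion: the radical of an ideal is closed under addition. *)
Lemma ideal_exprD I x y a b :
  is_ideal I -> I (x ^+ a) -> I (y ^+ b) -> I ((x + y) ^+ (a + b)).
Proof.
move=> HI Ixa Iyb; rewrite exprDn; apply: ideal_sum_seq => // i; apply: idealMn => //.
case: (leqP b i) => [bi|ib]; first by apply: (idealM _ HI); apply: (ideal_expr_le HI Iyb).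
by apply: (idealMr _ HI); apply: (ideal_expr_le HI Ixa); have := ltn_ord i; lia.
Qed.

Lemma is_ideal_colon K x : is_ideal K -> is_ideal (colon K x).
Proof.
move=> HK; split=> [|a b|r a]; rewrite /colon.
- by rewrite mul0r; apply: ideal0.
- by rewrite mulrDl; apply: idealD.
- by rewrite -mulrA; apply: idealM.
Qed.

Lemma is_ideal_adjoin K x : is_ideal K -> is_ideal (adjoin K x).
Proof.
move=> HK; split=> [|_ _ [k [r [Kk ->]]] [k' [r' [Kk' ->]]]|c _ [k [r [Kk ->]]]].
- by exists 0, 0; rewrite mul0r addr0; split=> //; apply: ideal0.
- exists (k + k'), (r + r'); split; first exact: idealD.
  by rewrite mulrDl addrACA.
- exists (c * k), (c * r); split; first exact: idealM.
  by rewrite mulrDr mulrA.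
Qed.

Lemma is_ideal_sum I J : is_ideal I -> is_ideal J -> is_ideal (ideal_sum I J).
Proof.
move=> HI HJ; split=> [|_ _ [u [v [Iu [Jv ->]]]] [u' [v' [Iu' [Jv' ->]]]]|r _ [u [v [Iu [Jv ->]]]]].
- by exists 0, 0; rewrite addr0; split; [apply: ideal0 | split; first apply: ideal0].
- exists (u + u'), (v + v'); rewrite addrACA.
  by split; [exact: idealD | split; first exact: idealD].
- by exists (r * u), (r * v); rewrite mulrDr; split; [exact: idealM | split; first exact: idealM].
Qed.

Lemma is_ideal_meet I J : is_ideal I -> is_ideal J -> is_ideal (ideal_meet I J).
Proof.
move=> HI HJ; split=> [|u v [Iu Ju] [Iv Jv]|r u [Iu Ju]].
- by split; apply: ideal0.
- by split; apply: idealD.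
- by split; apply: idealM.
Qed.

Lemma incl_colon K x : is_ideal K -> incl K (colon K x).
Proof. by move=> HK y; apply: idealMr. Qed.

Lemma incl_adjoin K x : is_ideal K -> incl K (adjoin K x).
Proof. by move=> HK k Kk; exists k, 0; rewrite mul0r addr0. Qed.

Lemma adjoin_mem K x : is_ideal K -> adjoin K x x.
Proof. by move=> HK; exists 0, 1; rewrite mul1r add0r; split=> //; apply: ideal0. Qed.

Lemma sub_rad_incl m J J' : sub_rad m J -> incl J J' -> sub_rad m J'.
Proof. by move=> mJ JJ' x /mJ [k Jxk]; exists k; apply: JJ'. Qed.

Lemma incl_of_meet_sum K D D' : is_ideal K -> is_ideal D -> is_ideal D' -> incl D D' ->
  incl (ideal_meet D' K) D -> incl (ideal_sum D' K) (ideal_sum D K) -> incl D' D.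
Proof.
move=> HK HD HD' DD' meetD' sumD' x D'x.
have [d [c [Dd [Kc xE]]]] : ideal_sum D K x.
  by apply: sumD'; exists x, 0; rewrite addr0; split=> //; split=> //; apply: ideal0.
rewrite xE; apply: idealD => //; apply: meetD'; split=> //.
by have := idealB HD' D'x (DD' _ Dd); rewrite xE addrAC subrr add0r.
Qed.
End Ideals.

Arguments unit_ideal {A}.

Definition asbool (P : Prop) : bool := if excluded_middle_informative P then true else false.

Lemma asboolP (P : Prop) : reflect P (asbool P).
Proof. by rewrite /asbool; case: excluded_middle_informative => HP; constructor. Qed.

Section ChainLength.
Variable A : comNzRingType.
Implicit Types (J K lo hi : A -> Prop) (D C : nat -> A -> Prop).

Definition strict_at D i := exists x, D i.+1 x /\ ~ D i x.
Definition nstrict D k := (\sum_(i < k) asbool (strict_at D i))%nat.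
Definition chain_in lo hi k D :=
  forall i, (i <= k)%nat -> [/\ is_ideal (D i), incl lo (D i) & incl (D i) hi].
Definition increasing k D := forall i, (i < k)%nat -> incl (D i) (D i.+1).
(* The length of [hi/lo] is at most [N]: no chain of ideals from [lo] to [hi]
   has more than [N] strict steps. *)
Definition len_le lo hi N :=
  forall k D, chain_in lo hi k D -> increasing k D -> (nstrict D k <= N)%nat.

Lemma nstrictS D k : nstrict D k.+1 = (nstrict D k + asbool (strict_at D k))%nat.
Proof. by rewrite /nstrict big_ord_recr. Qed.

Lemma chain_inW lo hi k D : chain_in lo hi k.+1 D -> chain_in lo hi k D.
Proof. by move=> Dk i ik; apply/Dk/leqW. Qed.

Lemma increasingW k D : increasing k.+1 D -> increasing k D.
Proof. by move=> Dinc i ik; apply/Dinc/leqW. Qed.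

Lemma not_strict_at D i : ~ strict_at D i -> incl (D i.+1) (D i).
Proof. by move=> nD x Dx; apply: NNPP => nDx; apply: nD; exists x. Qed.

Lemma len_le_mono lo hi lo' hi' N N' : incl lo' lo -> incl hi hi' -> (N' <= N)%nat ->
  len_le lo' hi' N' -> len_le lo hi N.
Proof.
move=> lo'lo hihi' N'N lN' k D Dk Dinc; apply: leq_trans N'N; apply: lN' Dinc => i /Dk[HDi loD Dhi].
by split=> // z Hz; [apply/loD/lo'lo | apply/hihi'/Dhi].
Qed.

(* Additivity of length along [K ⊆ K' ⊆ A]: intersect a chain with [K'] and add [K'] to it. *)
Lemma len_le_split K K' a b : is_ideal K' -> incl K K' ->
  len_le K K' a -> len_le K' unit_ideal b -> len_le K unit_ideal (a + b)%nat.
Proof.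
move=> HK' KK' la lb k D Dk Dinc.
pose E i := ideal_meet (D i) K'; pose F i := ideal_sum (D i) K'.
have Ek : chain_in K K' k E.
  move=> i /Dk[HDi KDi _]; split; first exact: is_ideal_meet.
    by move=> z Kz; split; [apply: KDi | apply: KK'].
  by move=> z [].
have Fk : chain_in K' unit_ideal k F.
  move=> i /Dk[HDi _ _]; split=> //; first exact: is_ideal_sum.
  by move=> z K'z; exists 0, z; rewrite add0r; split; first apply: ideal0.
have Einc : increasing k E by move=> i /Dinc DD z [Dz K'z]; split=> //; apply: DD.
have Finc : increasing k F.
  by move=> i /Dinc DD z [u [v [Du [K'v ->]]]]; exists u, v; split=> //; apply: DD.
apply: leq_trans (leq_add (la _ _ Ek Einc) (lb _ _ Fk Finc)).
rewrite /nstrict -big_split /=; apply: leq_sum => i _.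
case: (asboolP (strict_at D i)) => // -[x [D1x nDx]].
case: (asboolP (strict_at E i)) => // nE; case: (asboolP (strict_at F i)) => // nF.
have [[HDi _ _] [HD1 _ _]] := (Dk i (ltnW (ltn_ord i)), Dk i.+1 (ltn_ord i)).
case: nDx; apply: (incl_of_meet_sum HK' HDi HD1 (Dinc i (ltn_ord i))) D1x.
- by move=> z /(not_strict_at nE) [].
- exact: not_strict_at nF.
Qed.

Lemma len_le_colon K x N : is_ideal K ->
  len_le (colon K x) unit_ideal N -> len_le K (adjoin K x) N.
Proof.
move=> HK lN k D Dk Dinc; pose E i := colon (D i) x.
have Ek : chain_in (colon K x) unit_ideal k E.
  by move=> i /Dk[HDi KDi _]; split=> //; [exact: is_ideal_colon | move=> z; apply: KDi].
apply: leq_trans (lN _ _ Ek (fun i ik z => Dinc i ik _)); apply: leq_sum => i _.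
case: (asboolP (strict_at D i)) => // -[y [D1y nDy]].
have [[HDi KDi _] [HD1 KD1 D1adj]] := (Dk i (ltnW (ltn_ord i)), Dk i.+1 (ltn_ord i)).
have [c [r [Kc yE]]] := D1adj _ D1y.
case: asboolP => // nE; case: nDy; rewrite yE; apply: idealD (KDi _ Kc) _ => //.
apply: (not_strict_at nE); rewrite /E /colon.
by have := idealB HD1 D1y (KD1 _ Kc); rewrite yE addrAC subrr add0r.
Qed.

Lemma len_le_unit J : J 1 -> len_le J unit_ideal 0.
Proof.
move=> J1 k D Dk _; rewrite leqn0 /nstrict; apply/eqP/big1 => i _.
case: asboolP => // -[y [_]]; case.
by have [HDi JDi _] := Dk i (ltnW (ltn_ord i)); apply: ideal1 => //; apply: JDi.
Qed.

Lemma len_le_maximal m J : maximal_ideal m -> incl m J -> len_le J unit_ideal 1.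
Proof.
move=> [_ mmax] mJ k D Dk Dinc.
(* A strict step can only go from [m] to the unit ideal. *)
suff : leq (nstrict D k) (asbool (D k 1)) by move/leq_trans; apply; case: asbool.
elim: k D Dk Dinc => [|k IHk] D Dk Dinc; first by rewrite /nstrict big_ord0.
rewrite nstrictS; have := IHk D (chain_inW Dk) (increasingW Dinc).
have [[HDk JDk _] [HD1 JD1 _]] := (Dk k (leqnSn k), Dk k.+1 (leqnn _)).
have DD := Dinc k (ltnSn k).
case: (asboolP (strict_at D k)) => [[y [D1y nDy]]|_]; last first.
  by rewrite addn0 => /leq_trans; apply; case: asboolP => // /DD; case: asboolP.
have nDk1 : ~ D k 1 by move=> Dk1; apply: nDy; apply: ideal1.
case: asboolP => // _; rewrite leqn0 => /eqP->; case: asboolP => // nD1.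
case: nDy; apply/JDk/mJ/(mmax (D k.+1) (conj HD1 nD1)) => // z /mJ/JDk; exact: DD.
Qed.

Lemma len_le_pred J J' p : is_ideal J -> is_ideal J' -> incl J J' -> (exists x, J' x /\ ~ J x) ->
  len_le J unit_ideal p -> (0 < p)%nat /\ len_le J' unit_ideal p.-1.
Proof.
move=> HJ HJ' JJ' [x [J'x nJx]] lp.
have lt_p k D : chain_in J' unit_ideal k D -> increasing k D -> (nstrict D k < p)%nat.
  move=> Dk Dinc; pose D' i := if i is j.+1 then D j else J.
  have D'k : chain_in J unit_ideal k.+1 D'.
    case=> [|i] /= ik; first by split.
    by have [HDi J'Di _] := Dk i ik; split=> // z /JJ'/J'Di.
  have D'inc : increasing k.+1 D'.
    case=> [|i] /= ik; last exact: Dinc.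
    by have [_ J'D _] := Dk 0%nat isT; move=> z /JJ'/J'D.
  have := lp _ _ D'k D'inc; rewrite /nstrict big_ord_recl /=.
  case: asboolP => [_|[]]; first by rewrite add1n.
  by exists x; split=> //; have [_ J'D _] := Dk 0%nat isT; apply: J'D.
have p_gt0 : (0 < p)%nat.
  have := lt_p 0%nat (fun _ => J'); rewrite /nstrict big_ord0; apply=> // i _.
  by split=> // z.
by split=> // k D Dk Dinc; rewrite -ltnS prednK //; apply: lt_p.
Qed.

End ChainLength.

Section QuotientLength.
Variable A : comNzRingType.
Implicit Types (lo : A -> Prop) (C D : nat -> A -> Prop).

(* Deleting the non-strict steps of an increasing chain. *)
Lemma ideal_chain_of_increasing lo k D : chain_in lo unit_ideal k D -> increasing k D ->
  exists C, ideal_chain lo (nstrict D k) C /\ forall x, C (nstrict D k) x <-> D k x.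
Proof.
elim: k D => [|k IHk] D Dk Dinc.
  by rewrite /nstrict big_ord0; exists D; split=> //; split=> // i /Dk[].
have [C [[Cin Cstep] CD]] := IHk D (chain_inW Dk) (increasingW Dinc).
have DD := Dinc k (ltnSn k); have [HD1 loD1 _] := Dk k.+1 (leqnn _).
rewrite nstrictS; set s := nstrict D k in Cin Cstep CD *.
case: (asboolP (strict_at D k)) => [[y [D1y nDy]]|nD]; last first.
  rewrite addn0; exists C; split; first by split.
  by move=> x; rewrite CD; split=> [/DD|/(not_strict_at nD)].
rewrite addn1; exists (fun i => if (i <= s)%nat then C i else D k.+1).
rewrite ltnn; split=> //; split=> [i _|i].
  by case: ifP => [/Cin|_].
rewrite ltnS; case: (ltngtP i s) => // [lis|->] _; first exact: Cstep.
split; first by move=> x /CD/DD.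
by exists y; split=> // /CD.
Qed.

Lemma ideal_chain_increasing lo n C : ideal_chain lo n C ->
  [/\ chain_in lo unit_ideal n C, increasing n C & nstrict C n = n].
Proof.
case=> Cin Cstep; split.
- by move=> i /Cin[HCi loC].
- by move=> i /Cstep[].
- rewrite /nstrict (eq_bigr (fun _ => 1%nat)) ?sum_nat_const ?card_ord ?muln1 // => i _.
  by case: asboolP => // -[]; case: (Cstep i (ltn_ord i)).
Qed.

Lemma ideal_chain_le lo n C N : ideal_chain lo n C -> len_le lo unit_ideal N -> (n <= N)%nat.
Proof. by case/ideal_chain_increasing=> Cn Cinc <-; apply. Qed.

Lemma quotient_length_is_len_le lo n : quotient_length_is lo n -> len_le lo unit_ideal n.
Proof.
case=> _ nmax k D Dk Dinc; have [C [HC _]] := ideal_chain_of_increasing Dk Dinc.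
exact: nmax HC.
Qed.

Lemma quotient_length_is_le lo n N :
  quotient_length_is lo n -> len_le lo unit_ideal N -> (n <= N)%nat.
Proof. by case=> [[C HC] _]; exact: ideal_chain_le HC. Qed.

Lemma quotient_length_exists lo N :
  is_ideal lo -> len_le lo unit_ideal N -> exists n, quotient_length_is lo n.
Proof.
move=> Hlo lN; pose P k := asbool (exists C, ideal_chain lo k C).
have P0 : exists k, P k by exists 0%nat; apply/asboolP; exists (fun _ => lo); split.
have PN k : P k -> (k <= N)%nat by case/asboolP=> C /ideal_chain_le; apply.
case: (ex_maxnP P0 PN) => n /asboolP Pn nmax; exists n; split=> // k C HC.
by apply: nmax; apply/asboolP; exists C.
Qed.

Lemma quotient_length_is_gt0 lo n : is_ideal lo -> ~ lo 1 -> quotient_length_is lo n -> (0 < n)%nat.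
Proof.
move=> Hlo nlo1 [_ nmax]; apply: (nmax 1%nat (fun i => if i is 0%nat then lo else unit_ideal)).
split; first by case.
by case=> // _; split=> //; exists 1.
Qed.

End QuotientLength.

Lemma first_step (Q : nat -> Prop) k : ~ Q 0%nat -> Q k -> exists j, ~ Q j /\ Q j.+1.
Proof.
move=> nQ0; elim: k => [|k IHk] Qk //.
by case: (classic (Q k)) => [/IHk|nQk] //; exists k.
Qed.

Section NoetherianLocal.
Variable A : comNzRingType.
Implicit Types (I J M m : A -> Prop) (x y : A).

Lemma maximal_is_ideal m : maximal_ideal m -> is_ideal m. Proof. by case=> -[]. Qed.
Lemma maximal_not1 m : maximal_ideal m -> ~ m 1. Proof. by case=> -[]. Qed.

Lemma local_maximal_eq m m' : local_ring A -> maximal_ideal m -> maximal_ideal m' -> m' = m.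
Proof.
move=> [m0 [_ m0_uniq]] maxm maxm'; apply: functional_extensionality => x.
by apply: propositional_extensionality; rewrite (m0_uniq _ maxm' x) (m0_uniq _ maxm x).
Qed.

Hypothesis noethA : noetherian A.

(* Maximal members exist by the ascending chain condition and dependent choice. *)
Lemma noetherian_maximal (P : (A -> Prop) -> Prop) I0 :
  (forall I, P I -> is_ideal I) -> P I0 ->
  exists M, [/\ P M, incl I0 M & forall J, P J -> incl M J -> incl J M].
Proof.
move=> P_ideal PI0; apply: NNPP => nmax.
have larger M : P M -> incl I0 M -> exists J, [/\ P J, incl I0 J, incl M J & ~ incl J M].
  move=> PM I0M; apply: NNPP => nJ; apply: nmax; exists M; split=> // J PJ MJ.
  apply: NNPP => nJM; apply: nJ; exists J; split=> // x /I0M; exact: MJ.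
pose next M := epsilon (inhabits M) (fun J => [/\ P J, incl I0 J, incl M J & ~ incl J M]).
pose C n := iter n next I0.
have C_P n : P (C n) /\ incl I0 (C n).
  elim: n => [|n [PCn I0Cn]] /=; first by split.
  by have [PJ I0J _ _] := epsilon_spec (inhabits (C n)) _ (larger _ PCn I0Cn).
have C_step n : incl (C n) (C n.+1) /\ ~ incl (C n.+1) (C n).
  have [PCn I0Cn] := C_P n.
  by have [_ _ CJ nJC] := epsilon_spec (inhabits (C n)) _ (larger _ PCn I0Cn).
have [N CN] := noethA (fun n => P_ideal _ (proj1 (C_P n))) (fun n => proj1 (C_step n)).
by case: (C_step N) => _; apply; apply: CN.
Qed.

Lemma exists_socle_element m J : is_ideal J -> sub_rad m J -> ~ J 1 ->
  exists x, ~ J x /\ forall y, m y -> J (y * x).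
Proof.
move=> HJ mJ nJ1; pose P I := [/\ is_ideal I, ~ I 1 & exists x, forall c, I c <-> J (c * x)].
have PJ : P J by split=> //; exists 1 => c; rewrite mulr1.
have [M [[HM nM1 [x Mx]] JM Mmax]] :=
  noetherian_maximal (fun I (PI : P I) => let: And3 h _ _ := PI in h) PJ.
exists x; split=> [Jx|y my]; first by apply/nM1/Mx; rewrite mul1r.
apply/Mx; apply: NNPP => nMy; have [k Jyk] := mJ y my.
have nMy0 : ~ M (y ^+ 0) by rewrite expr0.
have [j [nMyj MyjS]] := first_step (Q := fun j => M (y ^+ j)) nMy0 (JM _ Jyk).
have PMy : P (colon M (y ^+ j)).
  split=> //; first exact: is_ideal_colon.
    by rewrite /colon mul1r.
  by exists (y ^+ j * x) => c; rewrite /colon mulrA; exact: Mx.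
by apply/nMy/(Mmax _ PMy (incl_colon _ HM)); rewrite /colon -exprS.
Qed.

Section Local.
Variable m : A -> Prop.
Hypotheses (localA : local_ring A) (maxm : maximal_ideal m).

Lemma unit_of_not_maximal x : ~ m x -> exists u, u * x = 1.
Proof.
move=> nmx; apply: NNPP => nunit; pose I0 y := exists r, y = r * x.
have pI0 : Defs.proper_ideal I0.
  split=> [|[r r1]]; last by apply: nunit; exists r.
  split=> [|_ _ [r ->] [s ->]|c _ [r ->]]; first by exists 0; rewrite mul0r.
    by exists (r + s); rewrite mulrDl.
  by exists (c * r); rewrite mulrA.
have [M [pM I0M Mmax]] := noetherian_maximal (fun I (pI : Defs.proper_ideal I) => proj1 pI) pI0.
rewrite -(local_maximal_eq localA maxm (conj pM Mmax)) in nmx.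
by apply/nmx/I0M; exists 1; rewrite mul1r.
Qed.

Lemma maximal_expr x k : m (x ^+ k) -> m x.
Proof.
move=> mxk; apply: NNPP => /unit_of_not_maximal[u ux]; apply: (maximal_not1 maxm).
by rewrite -(expr1n _ k) -ux exprMn; apply: idealM mxk; exact: maximal_is_ideal.
Qed.

(* An ideal whose radical contains [m] has finite colength: otherwise a maximal
   counterexample [M] would have both [M : x] and [M + Ax] of finite colength. *)
Lemma len_le_of_sub_rad J : is_ideal J -> sub_rad m J -> exists N, len_le J unit_ideal N.
Proof.
move=> HJ mJ; apply: NNPP => ninf.
pose P I := [/\ is_ideal I, sub_rad m I & ~ exists N, len_le I unit_ideal N].
have [M [[HM mM Minf] _ Mmax]] :=
  noetherian_maximal (fun I (PI : P I) => let: And3 h _ _ := PI in h) (And3 HJ mJ ninf).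
case: (classic (M 1)) => [M1|nM1]; first by apply: Minf; exists 0%nat; exact: len_le_unit.
case: (classic (incl m M)) => [mM'|nmM].
  by apply: Minf; exists 1%nat; exact: len_le_maximal maxm mM'.
have [y [my nMy]] : exists y, m y /\ ~ M y.
  by apply: NNPP => ny; apply: nmM => z mz; apply: NNPP => nMz; apply: ny; exists z.
have nMy0 : ~ M (y ^+ 0) by rewrite expr0.
have [k Myk] := mM y my; have [j [nMyj MyjS]] := first_step (Q := fun j => M (y ^+ j)) nMy0 Myk.
set x := y ^+ j in nMyj MyjS.
have finite_above I : is_ideal I -> incl M I -> ~ incl I M -> exists N, len_le I unit_ideal N.
  move=> HI MI nIM; apply: NNPP => Iinf; apply/nIM/(Mmax I) => //.
  by split=> //; apply: sub_rad_incl MI.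
have [N1 lN1] : exists N, len_le (colon M x) unit_ideal N.
  apply: finite_above (is_ideal_colon _ HM) (incl_colon _ HM) _ => /(_ y).
  by rewrite /colon /x -exprS => /(_ MyjS).
have [N2 lN2] : exists N, len_le (adjoin M x) unit_ideal N.
  apply: finite_above (is_ideal_adjoin _ HM) (incl_adjoin _ HM) _.
  by move=> /(_ x (adjoin_mem _ HM)).
apply: Minf; exists (N1 + N2)%nat.
by apply: len_le_split (is_ideal_adjoin _ HM) (incl_adjoin _ HM) _ lN2; exact: len_le_colon.
Qed.

End Local.
End NoetherianLocal.

(* Unbundled, so that it applies to iterates [iter k phi] and to composites. *)
Record ring_hom (A B : comNzRingType) (h : A -> B) : Prop := RingHom {
  ring_homD : forall x y, h (x + y) = h x + h y;
  ring_homM : forall x y, h (x * y) = h x * h y;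
  ring_hom0 : h 0 = 0;
  ring_hom1 : h 1 = 1 }.

Lemma rmorph_ring_hom (A B : comNzRingType) (h : {rmorphism A -> B}) : ring_hom h.
Proof. by split; [exact: rmorphD | exact: rmorphM | exact: rmorph0 | exact: rmorph1]. Qed.

Lemma ring_hom_comp (A B C : comNzRingType) (g : A -> B) (h : B -> C) :
  ring_hom g -> ring_hom h -> ring_hom (h \o g).
Proof.
case=> gD gM g0 g1 [hD hM h0 h1]; split=> [x y|x y||] /=.
- by rewrite gD hD.
- by rewrite gM hM.
- by rewrite g0 h0.
- by rewrite g1 h1.
Qed.

Lemma ring_hom_iter (A : comNzRingType) (g : A -> A) n : ring_hom g -> ring_hom (iter n g).
Proof.
move=> Hg; elim: n => [|n IHn]; first by split.
have -> : iter n.+1 g = g \o iter n g by apply: functional_extensionality => x; rewrite iterS.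
exact: ring_hom_comp.
Qed.

Lemma ring_hom_expr (A B : comNzRingType) (h : A -> B) x n : ring_hom h -> h (x ^+ n) = h x ^+ n.
Proof.
case=> _ hM _ h1; elim: n => [|n IHn]; first by rewrite !expr0.
by rewrite !exprS hM IHn.
Qed.

Section ExtendedIdeal.
Variables A B : comNzRingType.
Implicit Types (I J : A -> Prop) (L : B -> Prop) (g : A -> B).

Lemma is_ideal_ext g I : is_ideal (ext_ideal g I).
Proof.
split=> [|_ _ [s [Is ->]] [s' [Is' ->]]|r _ [s [Is ->]]].
- by exists [::]; rewrite big_nil; split=> // p; rewrite in_nil.
- exists (s ++ s'); rewrite big_cat; split=> // p.
  by rewrite mem_cat => /orP[/Is|/Is'].
- exists [seq (r * p.1, p.2) | p <- s]; split; first by move=> _ /mapP[p /Is ? ->].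
  by rewrite big_map mulr_sumr; apply: eq_bigr => p _; rewrite mulrA.
Qed.

Lemma ext_ideal_mem g I a : I a -> ext_ideal g I (g a).
Proof.
by move=> Ia; exists [:: (1, a)]; rewrite big_seq1 mul1r; split=> // p; rewrite inE => /eqP->.
Qed.

Lemma ext_ideal_min g I L : is_ideal L -> (forall a, I a -> L (g a)) -> incl (ext_ideal g I) L.
Proof.
move=> HL IL _ [s [Is ->]]; apply: ideal_sum_mem => // p /Is Ip.
by apply: idealM => //; apply: IL.
Qed.

Lemma ext_ideal_incl g I J : incl I J -> incl (ext_ideal g I) (ext_ideal g J).
Proof.
by move=> IJ; apply: ext_ideal_min (is_ideal_ext _ _) _ => a /IJ; exact: ext_ideal_mem.
Qed.

Lemma is_ideal_preim g L : ring_hom g -> is_ideal L -> is_ideal (fun x => L (g x)).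
Proof.
case=> gD gM g0 _ HL; split=> [|x y|r x]; rewrite ?g0 ?gD ?gM.
- exact: ideal0.
- exact: idealD.
- exact: idealM.
Qed.

Lemma eq_ext_ideal g g' I : g =1 g' -> ext_ideal g I = ext_ideal g' I.
Proof. by move=> /functional_extensionality->. Qed.

Lemma ext_ideal_rad g I L : is_ideal L -> (forall a, I a -> exists e, L (g a ^+ e)) ->
  forall y, ext_ideal g I y -> exists N, L (y ^+ N).
Proof.
move=> HL Irad _ [s [Is ->]]; elim: s Is => [|p s IHs] Is.
  by exists 1%nat; rewrite big_nil expr1; apply: ideal0.
have [e Le] := Irad _ (Is p (mem_head _ _)).
have [N LN] := IHs (fun q sq => Is q (mem_behead (s := p :: s) sq)).
by rewrite big_cons; exists (e + N)%nat; apply: ideal_exprD => //; rewrite exprMn; apply: idealM.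
Qed.

End ExtendedIdeal.

Section ExtendedIdealComp.
Variables A B C : comNzRingType.
Variables (g : A -> B) (h : B -> C).
Implicit Types (I : A -> Prop).

Lemma ext_ideal_comp I : ring_hom h ->
  incl (ext_ideal h (ext_ideal g I)) (ext_ideal (h \o g) I).
Proof.
move=> Hh; apply: ext_ideal_min (is_ideal_ext _ _) _ => _ [s [Is ->]].
rewrite (big_morph h (ring_homD Hh) (ring_hom0 Hh)); apply: ideal_sum_mem (is_ideal_ext _ _) _.
move=> p /Is Ip; rewrite (ring_homM Hh); apply: idealM (is_ideal_ext _ _) _.
exact: (ext_ideal_mem (h \o g)).
Qed.

Lemma ext_ideal_comp_incl I : incl (ext_ideal (h \o g) I) (ext_ideal h (ext_ideal g I)).
Proof.
by apply: ext_ideal_min (is_ideal_ext _ _) _ => a Ia; do 2 apply: ext_ideal_mem.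
Qed.

Lemma sub_rad_comp a b c : ring_hom h ->
  sub_rad b (ext_ideal g a) -> sub_rad c (ext_ideal h b) -> sub_rad c (ext_ideal (h \o g) a).
Proof.
move=> Hh b_rad c_rad z /c_rad[k zk].
have h_rad b0 : b b0 -> exists e, ext_ideal (h \o g) a (h b0 ^+ e).
  move=> /b_rad[e ge]; exists e; rewrite -ring_hom_expr //.
  by apply/ext_ideal_comp/ext_ideal_mem.
have [N zkN] := ext_ideal_rad (is_ideal_ext _ _) h_rad zk.
by exists (k * N)%nat; rewrite exprM.
Qed.

End ExtendedIdealComp.

Section ExtendedLength.
Variables B C : comNzRingType.
Variables (h : B -> C) (b : B -> Prop).
Hypotheses (Hh : ring_hom h) (noethB : noetherian B).
Implicit Types (J : B -> Prop).

Lemma len_le_ext_unit J N : J 1 -> len_le (ext_ideal h J) unit_ideal N.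
Proof.
move=> J1; have hJ1 : ext_ideal h J 1 by rewrite -(ring_hom1 Hh); exact: ext_ideal_mem.
exact: len_le_mono (len_le_unit hJ1).
Qed.

Lemma len_le_socle_step J p : is_ideal J -> sub_rad b J -> ~ J 1 -> len_le J unit_ideal p ->
  exists x, [/\ (0 < p)%nat, len_le (adjoin J x) unit_ideal p.-1 & forall y, b y -> J (y * x)].
Proof.
move=> HJ bJ nJ1 lJ; have [x [nJx bxJ]] := exists_socle_element noethB HJ bJ nJ1.
have Jx : exists y, adjoin J x y /\ ~ J y by exists x; split=> //; exact: adjoin_mem.
have [p_gt0 lJx] := len_le_pred HJ (is_ideal_adjoin x HJ) (incl_adjoin x HJ) Jx lJ.
by exists x.
Qed.

(* Adding a socle element [x] to [J] adds at most [λ(h)] to the length of the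
   extension, since [h(b)C] annihilates [h x] modulo [h(J)C]. *)
Lemma len_le_ext_adjoin J x q p : is_ideal J -> (forall y, b y -> J (y * x)) ->
  len_le (ext_ideal h b) unit_ideal q -> len_le (ext_ideal h (adjoin J x)) unit_ideal p ->
  len_le (ext_ideal h J) unit_ideal (q + p)%nat.
Proof.
move=> HJ bxJ lq lp; set K := ext_ideal h J; have HK : is_ideal K := is_ideal_ext h J.
apply: (len_le_split (is_ideal_adjoin (h x) HK) (incl_adjoin _ HK)).
  apply: len_le_colon => //; apply: len_le_mono lq => //.
  apply: ext_ideal_min (is_ideal_colon _ HK) _ => a ba.
  by rewrite /colon -(ring_homM Hh); apply/ext_ideal_mem/bxJ.
apply: len_le_mono lp => //; apply: ext_ideal_min (is_ideal_adjoin _ HK) _ => _ [k [r [Jk ->]]].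
rewrite (ring_homD Hh) (ring_homM Hh); exists (h k), (h r); split=> //.
exact: ext_ideal_mem.
Qed.

Lemma len_le_ext_mul q p J : len_le (ext_ideal h b) unit_ideal q ->
  is_ideal J -> sub_rad b J -> len_le J unit_ideal p -> len_le (ext_ideal h J) unit_ideal (p * q).
Proof.
move=> lq; elim: p J => [|p IHp] J HJ bJ lJ.
all: case: (classic (J 1)) => [/len_le_ext_unit//|nJ1].
all: have [x [p_gt0 lJx bxJ]] := len_le_socle_step HJ bJ nJ1 lJ => //.
rewrite mulSn; apply: len_le_ext_adjoin bxJ lq _ => //.
exact: IHp (is_ideal_adjoin x HJ) (sub_rad_incl bJ (incl_adjoin x HJ)) lJx.
Qed.

End ExtendedLength.

Section FlatLocal.
Variables A B : comNzRingType.
Variables (f : {rmorphism A -> B}) (m : A -> Prop) (n : B -> Prop).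
Hypotheses (noethA : noetherian A) (localA : local_ring A).
Hypotheses (maxm : maximal_ideal m) (maxn : maximal_ideal n).
Hypotheses (f_local : forall x, m x -> n (f x)) (flat_f : flat_via f).

(* The relation
   [f x = Σ b_p f a_p] lifts to [A]; reducing its first coordinate modulo [n]
   shows that [x] times a unit of [A] lies in [J]. *)
Lemma ext_ideal_flat_contract J x : is_ideal J -> ext_ideal f J (f x) -> J x.
Proof.
move=> HJ [s [Js fxE]]; set r := size s.
pose u (i : 'I_r.+1) := nth x (x :: map snd s) i.
pose v (i : 'I_r.+1) := nth 0 (1 :: map (fun p => - p.1) s) i.
have rel : \sum_(i < r.+1) f (u i) * v i = 0.
  rewrite big_ord_recl /u /v /= mulr1 fxE (big_nth (0, 0)) big_mkord -big_split /=.
  apply: big1 => i _; rewrite !(nth_map (0, 0)) ?ltn_ord //.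
  by rewrite mulrN mulrC subrr.
have [k [a [y [vE rel_a]]]] := flat_f rel.
have [j nma] : exists j, ~ m (a ord0 j).
  apply: NNPP => all_m; apply: (maximal_not1 maxn).
  have -> : 1 = \sum_(j < k) f (a ord0 j) * y j by rewrite -vE.
  apply: ideal_sum_seq (maximal_is_ideal maxn) _ => j.
  apply: (idealMr _ (maximal_is_ideal maxn)); apply: f_local.
  by apply: NNPP => nmaj; apply: all_m; exists j.
have [w wa] := unit_of_not_maximal noethA localA maxm nma.
have Jxa : J (x * a ord0 j).
  move/eqP: (rel_a j); rewrite big_ord_recl addr_eq0 => /eqP->.
  apply: idealN => //; apply: ideal_sum_seq => // i; apply: idealMr => //.
  by rewrite /u /= add0n (nth_map (0, 0)) ?ltn_ord //; apply/Js/mem_nth.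
by rewrite -[x]mulr1 -wa mulrCA; exact: idealM HJ Jxa.
Qed.

Lemma ideal_chain_ext lo k C :
  ideal_chain lo k C -> ideal_chain (ext_ideal f lo) k (fun i => ext_ideal f (C i)).
Proof.
case=> Cin Cstep; split=> [i /Cin[_ loC]|i /[dup] ik /Cstep[CC [x [C1x nCx]]]].
  by split; [exact: is_ideal_ext | exact: ext_ideal_incl].
split; first exact: ext_ideal_incl.
exists (f x); split; first exact: ext_ideal_mem.
by have [HCi _] := Cin i (ltnW ik); move/(ext_ideal_flat_contract HCi).
Qed.

End FlatLocal.

Section FiniteLength.
Variables A B : comNzRingType.
Variables (g : A -> B) (a : A -> Prop) (b : B -> Prop).
Hypotheses (localA : local_ring A) (noethB : noetherian B) (localB : local_ring B).
Hypotheses (maxa : maximal_ideal a) (maxb : maximal_ideal b).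
Hypotheses (g_local : forall x, a x -> b (g x)) (g_rad : sub_rad b (ext_ideal g a)).

Lemma ext_ideal_maximal_incl : incl (ext_ideal g a) b.
Proof. exact: ext_ideal_min (maximal_is_ideal maxb) g_local. Qed.

(* In a local ring, an ideal with maximal radical is primary: elements outside
   [b] are units. *)
Lemma finite_length_hom_of_rad : finite_length_hom g.
Proof.
move=> a' b' maxa' maxb'.
rewrite (local_maximal_eq localA maxa maxa') (local_maximal_eq localB maxb maxb').
split=> //; have Hext := is_ideal_ext g a; split.
- by split=> // /ext_ideal_maximal_incl; exact: maximal_not1.
- move=> x y xy; case: (classic (b y)) => [/g_rad|nby]; [by right | left].
  have [u uy] := unit_of_not_maximal noethB localB maxb nby.
  by rewrite -[x]mulr1 -uy mulrCA; apply: idealM.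
- by move=> x; split=> [/g_rad|[k /ext_ideal_maximal_incl]] //; exact: maximal_expr.
Qed.

Lemma quotient_length_hom_length : quotient_length_is (ext_ideal g a) (hom_length g).
Proof.
have [N lN] := len_le_of_sub_rad noethB maxb (is_ideal_ext g a) g_rad.
have [n0 qn0] := quotient_length_exists (is_ideal_ext g a) lN.
have ex_n : exists n, exists a', maximal_ideal a' /\ quotient_length_is (ext_ideal g a') n.
  by exists n0, a.
have [a' [maxa' qa']] := epsilon_spec (inhabits O) _ ex_n.
by rewrite -(local_maximal_eq localA maxa maxa').
Qed.

Lemma hom_length_gt0 : (0 < hom_length g)%nat.
Proof.
apply: quotient_length_is_gt0 (is_ideal_ext g a) _ quotient_length_hom_length.
by move/ext_ideal_maximal_incl; exact: maximal_not1.
Qed.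

End FiniteLength.

Lemma iter_local_sub_rad (A : comNzRingType) (g : A -> A) (m : A -> Prop) :
  ring_hom g -> (forall x, m x -> m (g x)) -> sub_rad m (ext_ideal g m) ->
  forall k, (forall x, m x -> m (iter k g x)) /\ sub_rad m (ext_ideal (iter k g) m).
Proof.
move=> Hg g_local g_rad; elim=> [|k [gk_local gk_rad]].
  by split=> // x mx; exists 1%nat; rewrite expr1; exact: (ext_ideal_mem (iter 0 g)).
split=> [x /gk_local/g_local //|].
have -> : iter k.+1 g = iter k g \o g by apply: functional_extensionality => x; rewrite iterSr.
exact: sub_rad_comp (ring_hom_iter k Hg) g_rad gk_rad.
Qed.

Section LogGrowth.
Local Open Scope R_scope.

Lemma ln_le (x y : R) : 0 < x -> x <= y -> ln x <= ln y.
Proof.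
move=> x_gt0 /Rle_lt_or_eq_dec [xy|->]; last exact: Rle_refl.
exact/Rlt_le/ln_increasing.
Qed.

Lemma Un_cv_bounded_div_succ (w : nat -> R) (C : R) :
  (forall n, Rabs (w n) <= C) -> Un_cv (fun n => w n / INR n.+1) 0.
Proof.
move=> w_le eps eps_gt0; have [N CN] := INR_archimed eps C eps_gt0.
exists N => n Nn; rewrite /R_dist Rminus_0_r.
have n1_gt0 : 0 < INR n.+1 by apply: lt_0_INR; lia.
have Nn1 : INR N <= INR n.+1 by apply: le_INR; lia.
have inv_gt0 := Rinv_0_lt_compat _ n1_gt0.
have inv_n1 : / INR n.+1 * INR n.+1 = 1 by apply: Rinv_l; lra.
rewrite Rabs_mult Rabs_inv (Rabs_right (INR n.+1)); last lra.
have := w_le n; have := Rabs_pos (w n); nra.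
Qed.

Lemma Un_cv_div_succ_shift (u v : nat -> R) (C h : R) :
  (forall n, Rabs (v n - u n) <= C) ->
  Un_cv (fun n => u n / INR n.+1) h -> Un_cv (fun n => v n / INR n.+1) h.
Proof.
move=> uv_le cv_u.
have := CV_plus _ _ _ _ cv_u (Un_cv_bounded_div_succ (w := fun n => v n - u n) uv_le).
rewrite Rplus_0_r; apply: Un_cv_ext => n; field.
by apply: not_0_INR.
Qed.

Lemma Un_cv_ln_div_succ_comparable (a b : nat -> nat) (c : nat) (h : R) :
  (forall n, (0 < a n)%nat) -> (forall n, (0 < b n)%nat) ->
  (forall n, (a n <= c * b n)%nat) -> (forall n, (b n <= c * a n)%nat) ->
  Un_cv (fun n => ln (INR (a n)) / INR n.+1) h ->
  Un_cv (fun n => ln (INR (b n)) / INR n.+1) h.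
Proof.
move=> a_gt0 b_gt0 ab ba; apply: (Un_cv_div_succ_shift (C := ln (INR c))) => n.
have INR_gt0 k : (0 < k)%nat -> 0 < INR k by move=> k_gt0; apply: lt_0_INR; lia.
have c_gt0 : (0 < c)%nat by have := ab n; have := a_gt0 n; case: (c) => //; lia.
have ln_mul_le x y : (x <= c * y)%nat -> (0 < x)%nat -> (0 < y)%nat ->
    ln (INR x) <= ln (INR c) + ln (INR y).
  move=> xy x_gt0 y_gt0; rewrite -ln_mult; try exact: INR_gt0.
  by apply: ln_le; [exact: INR_gt0 | rewrite -mult_INR; apply: le_INR; lia].
have := ln_mul_le _ _ (ab n) (a_gt0 n) (b_gt0 n).
have := ln_mul_le _ _ (ba n) (b_gt0 n) (a_gt0 n).
by move=> *; apply: Rabs_le; lra.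
Qed.

End LogGrowth.

Lemma h_alg_eq_of_comparable (A B : comNzRingType) (phi : A -> A) (psi : B -> B) (c : nat) :
  (forall k, 0 < hom_length (iter k phi))%nat -> (forall k, 0 < hom_length (iter k psi))%nat ->
  (forall k, hom_length (iter k phi) <= c * hom_length (iter k psi))%nat ->
  (forall k, hom_length (iter k psi) <= c * hom_length (iter k phi))%nat ->
  h_alg phi = h_alg psi.
Proof.
(* The two limit predicates are equivalent, so the [epsilon]s agree even when
   no limit exists. *)
move=> phi_gt0 psi_gt0 phi_le psi_le; rewrite /h_alg; congr (epsilon _ _).
apply: functional_extensionality => h; apply: propositional_extensionality.
by split=> cv; apply: Un_cv_ln_div_succ_comparable cv => k.
Qed.

Section FlatSquare.
Variables A B : comNzRingType.
Variables (f : {rmorphism A -> B}) (phi : {rmorphism A -> A}) (psi : {rmorphism B -> B}).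
Variables (m : A -> Prop) (n : B -> Prop).
Hypotheses (noethA : noetherian A) (localA : local_ring A).
Hypotheses (noethB : noetherian B) (localB : local_ring B).
Hypotheses (maxm : maximal_ideal m) (maxn : maximal_ideal n) (flat_f : flat_via f).
Hypotheses (f_local : forall x, m x -> n (f x)) (f_rad : sub_rad n (ext_ideal f m)).
Hypotheses (phi_local : forall x, m x -> m (phi x)) (phi_rad : sub_rad m (ext_ideal phi m)).
Hypothesis psi_f : forall x, psi (f x) = f (phi x).

Lemma iter_psi_f k x : iter k psi (f x) = f (iter k phi x).
Proof. by elim: k => //= k ->; rewrite psi_f. Qed.

Lemma psi_local x : n x -> n (psi x).
Proof.
have Hn := maximal_is_ideal maxn.
have fm_psi : incl (ext_ideal f m) (fun y => n (psi y)).
  apply: ext_ideal_min (is_ideal_preim (rmorph_ring_hom psi) Hn) _ => a ma.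
  by rewrite psi_f; apply/f_local/phi_local.
by move=> /f_rad[k /fm_psi]; rewrite rmorphXn; exact: maximal_expr.
Qed.

Lemma psi_sub_rad : sub_rad n (ext_ideal psi n).
Proof.
have := sub_rad_comp (rmorph_ring_hom f) phi_rad f_rad.
rewrite (@eq_ext_ideal _ _ _ (psi \o f)) => [|x]; last by rewrite /= psi_f.
move/sub_rad_incl; apply; apply: ext_ideal_min (is_ideal_ext _ _) _ => a ma.
exact/ext_ideal_mem/f_local.
Qed.

Lemma iter_phi_local_sub_rad k :
  (forall x, m x -> m (iter k phi x)) /\ sub_rad m (ext_ideal (iter k phi) m).
Proof. exact: iter_local_sub_rad (rmorph_ring_hom phi) phi_local phi_rad k. Qed.

Lemma iter_psi_local_sub_rad k :
  (forall x, n x -> n (iter k psi x)) /\ sub_rad n (ext_ideal (iter k psi) n).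
Proof. exact: iter_local_sub_rad (rmorph_ring_hom psi) psi_local psi_sub_rad k. Qed.

Let qlen_f := quotient_length_hom_length localA noethB maxm maxn f_rad.
Let qlen_phi k :=
  quotient_length_hom_length localA noethA maxm maxm (proj2 (iter_phi_local_sub_rad k)).
Let qlen_psi k :=
  quotient_length_hom_length localB noethB maxn maxn (proj2 (iter_psi_local_sub_rad k)).

Lemma hom_length_iter_psi_le k :
  (hom_length (iter k psi) <= hom_length (iter k phi) * hom_length f)%nat.
Proof.
apply: quotient_length_is_le (qlen_psi k) _.
have := len_le_ext_mul (rmorph_ring_hom f) noethA (quotient_length_is_len_le qlen_f)
  (is_ideal_ext _ _) (proj2 (iter_phi_local_sub_rad k)) (quotient_length_is_len_le (qlen_phi k)).
apply: len_le_mono (leqnn _) => // z /(ext_ideal_comp (rmorph_ring_hom f)).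
rewrite (@eq_ext_ideal _ _ _ (iter k psi \o f)) => [|x]; last by rewrite /= iter_psi_f.
by move: z; apply: ext_ideal_min (is_ideal_ext _ _) _ => a /f_local/ext_ideal_mem.
Qed.

(* Faithful flatness transports a composition series of [R/φ^k(m)R] to [S]. *)
Lemma hom_length_iter_phi_le k :
  (hom_length (iter k phi) <= hom_length f * hom_length (iter k psi))%nat.
Proof.
have psik := ring_hom_iter k (rmorph_ring_hom psi).
have [[C HC] _] := qlen_phi k.
apply: ideal_chain_le (ideal_chain_ext noethA localA maxm maxn f_local flat_f HC) _.
have := len_le_ext_mul psik noethB (quotient_length_is_len_le (qlen_psi k))
  (is_ideal_ext _ _) f_rad (quotient_length_is_len_le qlen_f).
apply: len_le_mono (leqnn _) => // z /(ext_ideal_comp psik).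
rewrite (@eq_ext_ideal _ _ _ (f \o iter k phi)) => [|x]; last by rewrite /= iter_psi_f.
exact: ext_ideal_comp_incl.
Qed.

Lemma psi_finite_length : self_map_finite_length psi.
Proof. exact: finite_length_hom_of_rad localB noethB localB maxn maxn psi_local psi_sub_rad. Qed.

Lemma h_alg_phi_psi : h_alg phi = h_alg psi.
Proof.
apply: (h_alg_eq_of_comparable (c := hom_length f)) => k.
- have [phik_local phik_rad] := iter_phi_local_sub_rad k.
  exact: hom_length_gt0 localA noethA maxm maxm phik_local phik_rad.
- have [psik_local psik_rad] := iter_psi_local_sub_rad k.
  exact: hom_length_gt0 localB noethB maxn maxn psik_local psik_rad.
- exact: hom_length_iter_phi_le.
- by rewrite mulnC; exact: hom_length_iter_psi_le.
Qed.

End FlatSquare.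

Theorem mainTheorem7 (A B : comNzRingType) (f : {rmorphism A -> B})
    (phi : {rmorphism A -> A}) (psi : {rmorphism B -> B})
    (HA : noetherian_local A) (HB : noetherian_local B)
    (Hflat : flat_via f) (Hf : finite_length_hom f)
    (Hphi : self_map_finite_length phi)
    (Hcomm : forall x : A, psi (f x) = f (phi x)) :
  self_map_finite_length psi /\ h_alg phi = h_alg psi.
Proof.
have [[noethA localA] [noethB localB]] := (HA, HB).
have [[m [maxm _]] [n [maxn _]]] := (localA, localB).
have [f_local [_ _ f_primary]] := Hf m n maxm maxn.
have f_rad : sub_rad n (ext_ideal f m) by move=> x /f_primary.
have [phi_local [_ _ phi_primary]] := Hphi m m maxm maxm.
have phi_rad : sub_rad m (ext_ideal phi m) by move=> x /phi_primary.
split; first exact: psi_finite_length noethB localB maxn f_local f_rad phi_local phi_rad Hcomm.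
exact: h_alg_phi_psi noethA localA noethB localB maxm maxn Hflat
  f_local f_rad phi_local phi_rad Hcomm.
Qed.
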